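(* Let $\{\mathcal{C}_n\}$ be a sequence of binary linear codes with blocklengths $N_n\to\infty$ and rates $r_n\to r$ for some $r\in(0,1)$. Suppose there is a constant $C>0$, independent of $p$ and $n$, such that the average EXIT function $h^{(n)}$ of $\mathcal{C}_n$ satisfies $$\frac{d h^{(n)}(p)}{dp}\ge C\log(N_n)\,h^{(n)}(p)\big(1-h^{(n)}(p)\big)\quad\text{for all }0<p<1,$$ and suppose the minimum distances $d^{(n)}_{\min}$ satisfy $\lim_{n\to\infty}\frac{\log d^{(n)}_{\min}}{\log N_n}=1$. Then $\{\mathcal{C}_n\}$ is capacity achieving on the BEC under block-MAP decoding.
   Context: Binary linear codes are assumed proper and of minimum distance at least $2$; rate $=K/N$; $\log$ is the natural logarithm. A uniform codeword $\underline{X}$ is sent over $\mathrm{BEC}(p)$ (each bit erased independently with probability $p$), giving $\underline{Y}$. The average EXIT function is $h(p)=\frac1N\sum_{i=1}^N H(X_i\mid\underline{Y}_{\sim i})$ (entropy in bits; $\underline{Y}_{\sim i}$ omits coordinate $i$). The block-MAP erasure probability $P_B(p)$ is the probability that $\underline{X}$ is not uniquely determined by $\underline{Y}$. A sequence of codes with rates $r_n\to r\in(0,1)$ is capacity achieving on the BEC under block-MAP decoding if $\lim_n P_B^{(n)}(p)=0$ for every $p\in[0,1-r)$. *)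

From Stdlib Require Import Reals.
From mathcomp Require Import all_boot.

Set Implicit Arguments.
Unset Strict Implicit.
Unset Printing Implicit Defensive.

Definition word (N : nat) := {ffun 'I_N -> bool}.
Definition code (N : nat) := {set word N}.

Definition zerow (N : nat) : word N := [ffun _ => false].
Definition xorw (N : nat) (x y : word N) : word N := [ffun i => xorb (x i) (y i)].

Definition is_linear (N : nat) (C : code N) : Prop :=
  zerow N \in C /\ (forall x y, x \in C -> y \in C -> xorw x y \in C).

Definition proper_code (N : nat) (C : code N) : Prop :=
  forall i : 'I_N, exists x, x \in C /\ x i = true.

Definition weight (N : nat) (x : word N) : nat := #|[set i | x i]|.

Definition dmin (N : nat) (C : code N) : nat :=
  \big[minn/N]_(x in C | x != zerow N) weight x.

Local Open Scope R_scope.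

Definition log2 (t : R) : R := ln t / ln 2.

Definition rate (N : nat) (C : code N) : R := log2 (INR #|C|) / INR N.

Definition pat_prob (N : nat) (p : R) (E : {set 'I_N}) : R :=
  p ^ #|E| * (1 - p) ^ (N - #|E|).

(* Block-MAP erasure probability: X uniform on C, erasure pattern E; the
   observation Y determines X uniquely iff no other codeword agrees with X
   on all non-erased positions. *)
Definition block_erasure (N : nat) (C : code N) (p : R) : R :=
  \big[Rplus/R0]_(x in C) \big[Rplus/R0]_(E : {set 'I_N})
    (/ INR #|C| * pat_prob p E *
     (if [exists x' in C, (x' != x) && [forall j, (j \notin E) ==> (x' j == x j)]]
      then 1 else 0)).

Definition xlog2 (t : R) : R := if Req_EM_T t 0 then 0 else t * log2 t.
Definition h2 (q : R) : R := - xlog2 q - xlog2 (1 - q).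

(* H(X_i | Y_{~i} = y) where y is the observation produced by codeword x and
   erasure pattern E, coordinate i being omitted: the posterior of X is uniform
   on the codewords agreeing with x at every non-erased position j <> i. *)
Definition cond_entropy_i (N : nat) (C : code N) (i : 'I_N) (x : word N)
    (E : {set 'I_N}) : R :=
  let S := [set x' in C | [forall j, ((j \notin E) && (j != i)) ==> (x' j == x j)]] in
  h2 (INR #|[set x' in S | x' i]| / INR #|S|).

(* H(X_i | Y_{~i}) = E_{(X,Y)} [ H(X_i | Y_{~i} = y) ] *)
Definition exit_i (N : nat) (C : code N) (i : 'I_N) (p : R) : R :=
  \big[Rplus/R0]_(x in C) \big[Rplus/R0]_(E : {set 'I_N})
    (/ INR #|C| * pat_prob p E * cond_entropy_i C i x E).

Definition exit_fun (N : nat) (C : code N) (p : R) : R :=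
  / INR N * \big[Rplus/R0]_(i : 'I_N) exit_i C i p.

(* Given the observation of a linear code over the BEC, the codeword is uniform on a
   coset of the subcode supported on the erasure pattern E, so every bit is either
   known or uniformly distributed.  Hence the average EXIT function h(p) is the
   expected fraction of undetermined bits and, by the Margulis-Russo formula, the
   derivative of the equivocation G(p) = E[log2 |C_E|] / N; since G(1) is the rate
   and h is nondecreasing, (1 - q) h(q) <= rate (area theorem).  Below q the
   differential inequality gives (ln h)' >= c ln N (1 - rate / (1 - q)), hence
   h(p) <= N^(-c (1 - rate / (1 - q)) (q - p)).  A block erasure needs a second
   compatible codeword, which differs from the sent one in at least d_min
   undetermined bits, so P_B <= (N / d_min) h.  As ln d_min / ln N -> 1, P_B(p)
   decays like a negative power of N. *)

From HB Require Import structures.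
From Stdlib Require Import Reals Lra ClassicalEpsilon.
From mathcomp Require Import all_boot.
Set Implicit Arguments.
Unset Strict Implicit.
Unset Printing Implicit Defensive.

(** * Subcodes supported on an erasure pattern *)

Section Xor.
Variable N : nat.
Implicit Types x y z : word N.

Lemma xorwE x y j : xorw x y j = xorb (x j) (y j).
Proof. by rewrite ffunE. Qed.

Lemma xorwK x : cancel (xorw x) (xorw x).
Proof. by move=> y; apply/ffunP => j; rewrite !xorwE; case: (x j); case: (y j). Qed.

Lemma xorwCA x y z : xorw x (xorw y z) = xorw y (xorw x z).
Proof. by apply/ffunP => j; rewrite !xorwE; case: (x j); case: (y j); case: (z j). Qed.

Lemma xorw_eq0 x y : (xorw x y == zerow N) = (x == y).
Proof.
apply/eqP/eqP => [xy0|->]; last by apply/ffunP => j; rewrite xorwE ffunE; case: (y j).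
apply/ffunP => j; have := congr1 (fun f : word N => f j) xy0.
by rewrite xorwE ffunE; case: (x j); case: (y j).
Qed.

Lemma card_xorw_eq (A B : {set word N}) w :
  {in A, forall z, xorw w z \in B} -> {in B, forall z, xorw w z \in A} -> #|A| = #|B|.
Proof.
have card_le (A' B' : {set word N}) : {in A', forall z, xorw w z \in B'} -> #|A'| <= #|B'|.
  move=> AB; rewrite -(card_imset _ (can_inj (xorwK w))); apply: subset_leq_card.
  by apply/subsetP => _ /imsetP [z zA ->]; apply: AB.
by move=> AB BA; apply/eqP; rewrite eqn_leq !card_le.
Qed.

Lemma card_bit_flip (S : {set word N}) (w : word N) (i : 'I_N) :
  w i -> {in S, forall y, xorw w y \in S} ->
  #|[set y in S | y i]| = #|[set y in S | ~~ y i]|.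
Proof.
move=> wi flip; apply: (card_xorw_eq (w := w)) => y;
  by rewrite !inE xorwE wi => /andP [/flip ->]; case: (y i).
Qed.

End Xor.

(* Coordinate [i] is [undetermined] by the erased set [F] when it cannot be recovered
   from the coordinates outside [F]. *)
Definition subcode N (C : code N) (F : {set 'I_N}) :=
  [set z in C | [forall j, (j \notin F) ==> ~~ z j]].
Definition undetermined N (C : code N) (F : {set 'I_N}) (i : 'I_N) :=
  [exists z in subcode C F, z i].

Section Subcode.
Variables (N : nat) (C : code N).
Hypothesis C_linear : is_linear C.
Implicit Types (x y z : word N) (F : {set 'I_N}).

Lemma xorw_code x y : x \in C -> y \in C -> xorw x y \in C.
Proof. by case: C_linear => _; apply. Qed.

Lemma zerow_subcode F : zerow N \in subcode C F.
Proof.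
rewrite inE; case: C_linear => -> _.
by apply/forallP => j; apply/implyP; rewrite ffunE.
Qed.

Lemma xorw_subcode F x y :
  x \in subcode C F -> y \in subcode C F -> xorw x y \in subcode C F.
Proof.
rewrite !inE => /andP [xC /forallP x0] /andP [yC /forallP y0].
rewrite xorw_code //=; apply/forallP => j; apply/implyP => jF.
by rewrite xorwE (negbTE (implyP (x0 j) jF)) (negbTE (implyP (y0 j) jF)).
Qed.

Lemma subcode_setU1 i F z : i \notin F ->
  (z \in subcode C (i |: F)) && ~~ z i = (z \in subcode C F).
Proof.
move=> iF; rewrite !inE -andbA; congr (_ && _); apply/andP/forallP => [[/forallP z0 zi] j|z0].
  apply/implyP => jF; case: (eqVneq j i) => [->//|ji].
  by apply: (implyP (z0 j)); rewrite !inE negb_or ji.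
split; last exact: implyP (z0 i) iF.
by apply/forallP => j; apply/implyP; rewrite !inE negb_or => /andP [_ /(implyP (z0 j))].
Qed.

Lemma card_subcode_setU1 i F : i \notin F ->
  #|subcode C (i |: F)| = ((if undetermined C (i |: F) i then 2 else 1) * #|subcode C F|)%N.
Proof.
move=> iF; set S := subcode C (i |: F).
have -> : #|S| = (#|[set z in S | z i]| + #|subcode C F|)%N.
  rewrite -(cardsID [set z : word N | z i] S); congr (_ + _)%N.
    by apply: eq_card => z; rewrite !inE andbC.
  by apply: eq_card => z; rewrite -(subcode_setU1 _ iF) in_setD [z \in [set _ | _]]inE andbC.
case: ifP => [/existsP [w /andP [wS wi]]|/negbT undet].
  rewrite mul2n -addnn; congr (_ + _)%N; apply: (card_xorw_eq (w := w)) => z.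
    rewrite [z \in _]inE => /andP [zS zi].
    by rewrite -(subcode_setU1 _ iF) xorw_subcode //= xorwE wi zi.
  rewrite -(subcode_setU1 _ iF) => /andP [zS zi].
  by rewrite [_ \in [set _ in S | _]]inE xorw_subcode //= xorwE wi (negbTE zi).
suff -> : [set z in S | z i] = set0 by rewrite cards0 mul1n.
apply/setP => z; rewrite in_set0 [z \in _]inE; apply/negbTE.
by apply: contra undet => /andP [zS zi]; apply/existsP; exists z; rewrite zS.
Qed.

End Subcode.

Local Open Scope R_scope.

Lemma Rplus_associative : associative Rplus.
Proof. by move=> x y z; rewrite Rplus_assoc. Qed.

HB.instance Definition _ :=
  Monoid.isComLaw.Build R R0 Rplus Rplus_associative Rplus_comm Rplus_0_l.

Definition b2R (b : bool) : R := if b then 1 else 0.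

Lemma b2R_ge0 b : 0 <= b2R b.
Proof. by case: b => /=; lra. Qed.

Section RealSums.
Variables (I : Type) (s : seq I) (P : pred I).
Implicit Types F G : I -> R.

Lemma rsumMl a F :
  \big[Rplus/R0]_(i <- s | P i) (a * F i) = a * \big[Rplus/R0]_(i <- s | P i) F i.
Proof. by rewrite (big_morph _ (Rmult_plus_distr_l a) (Rmult_0_r a)). Qed.

Lemma rsumN F :
  \big[Rplus/R0]_(i <- s | P i) (- F i) = - \big[Rplus/R0]_(i <- s | P i) F i.
Proof. by rewrite (big_morph _ Ropp_plus_distr Ropp_0). Qed.

Lemma INR_sum (F : I -> nat) :
  INR (\sum_(i <- s | P i) F i) = \big[Rplus/R0]_(i <- s | P i) INR (F i).
Proof. exact: (big_morph _ plus_INR). Qed.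

Lemma rsum_le F G : (forall i, P i -> F i <= G i) ->
  \big[Rplus/R0]_(i <- s | P i) F i <= \big[Rplus/R0]_(i <- s | P i) G i.
Proof. exact: (big_ind2 Rle (Rle_refl 0) Rplus_le_compat). Qed.

Lemma rsum_ge0 F : (forall i, P i -> 0 <= F i) -> 0 <= \big[Rplus/R0]_(i <- s | P i) F i.
Proof. exact: (big_ind (Rle 0) (Rle_refl 0) Rplus_le_le_0_compat). Qed.

Lemma derivable_pt_lim_rsum (F F' : I -> R -> R) x :
  (forall i, P i -> derivable_pt_lim (F i) x (F' i x)) ->
  derivable_pt_lim (fun y => \big[Rplus/R0]_(i <- s | P i) F i y) x
    (\big[Rplus/R0]_(i <- s | P i) F' i x).
Proof.
move=> dF; elim: s => [|a s' IH].
  rewrite big_nil; apply: (derivable_pt_lim_ext (fun _ => R0)).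
    by move=> y; rewrite big_nil.
  exact: derivable_pt_lim_const.
rewrite big_cons; case Pa: (P a).
  apply: derivable_pt_lim_ext (derivable_pt_lim_plus _ _ _ _ _ (dF a Pa) IH).
  by move=> y; rewrite big_cons Pa.
by apply: derivable_pt_lim_ext IH => y; rewrite big_cons Pa.
Qed.

End RealSums.

Lemma rsum_b2R (T : finType) (P : pred T) :
  \big[Rplus/R0]_(i : T) b2R (P i) = INR #|[set i | P i]|.
Proof.
rewrite -sum1dep_card INR_sum [RHS]big_mkcond.
by apply: eq_bigr => i _; case: (P i).
Qed.

Lemma rsum1_ord n : \big[Rplus/R0]_(i < n) 1 = INR n.
Proof. by rewrite -[in RHS](card_ord n) -sum1_card INR_sum. Qed.

Lemma rsum_cst (T : finType) (A : {set T}) (k : R) :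
  \big[Rplus/R0]_(i in A) k = INR #|A| * k.
Proof.
rewrite -sum1_card INR_sum Rmult_comm -rsumMl.
by apply: eq_bigr => i _; rewrite Rmult_1_r.
Qed.

Lemma rsum_term_le (T : finType) (P : pred T) (F : T -> R) (j : T) :
  (forall i, P i -> 0 <= F i) -> P j -> F j <= \big[Rplus/R0]_(i | P i) F i.
Proof.
move=> F_ge0 Pj; rewrite (bigD1 j) //=.
have : 0 <= \big[Rplus/R0]_(i | P i && (i != j)) F i.
  by apply: rsum_ge0 => i /andP [Pi _]; apply: F_ge0.
lra.
Qed.

Lemma ln2_gt0 : 0 < ln 2.
Proof. by have := ln_lt_2; lra. Qed.

Lemma ln_le x y : 0 < x -> x <= y -> ln x <= ln y.
Proof. by move=> x0 /Rle_lt_or_eq_dec [xy|<-]; [left; apply: ln_increasing | right]. Qed.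

Lemma exp_le x y : x <= y -> exp x <= exp y.
Proof. by case/Rle_lt_or_eq_dec => [xy|<-]; [left; apply: exp_increasing | right]. Qed.

Lemma xlog2_0 : xlog2 0 = 0.
Proof. by rewrite /xlog2; destruct Req_EM_T. Qed.

Lemma xlog2_1 : xlog2 1 = 0.
Proof. by rewrite /xlog2 /log2 ln_1; destruct Req_EM_T => //=; rewrite /Rdiv; ring. Qed.

Lemma h2_0 : h2 0 = 0.
Proof. by rewrite /h2 Rminus_0_r xlog2_0 xlog2_1; ring. Qed.

Lemma h2_1 : h2 1 = 0.
Proof. by rewrite /h2 Rminus_diag xlog2_0 xlog2_1; ring. Qed.

Lemma h2_half : h2 (/ 2) = 1.
Proof.
rewrite /h2 (_ : 1 - / 2 = / 2); last by field.
rewrite /xlog2; destruct Req_EM_T as [half0|half_ne0] => /=; first lra.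
rewrite /log2 ln_Rinv; last lra.
by field; have := ln2_gt0; lra.
Qed.

(** * The posterior of a bit *)

Definition posterior N (C : code N) (i : 'I_N) (x : word N) (E : {set 'I_N}) :=
  [set x' in C | [forall j, ((j \notin E) && (j != i)) ==> (x' j == x j)]].

Section Posterior.
Variables (N : nat) (C : code N).
Hypothesis C_linear : is_linear C.
Variables (i : 'I_N) (x : word N) (E : {set 'I_N}).
Hypothesis xC : x \in C.

Local Notation S := (posterior C i x E).

Lemma posteriorE y : (y \in S) = (xorw x y \in subcode C (i |: E)).
Proof.
rewrite !inE; congr andb.
  apply/idP/idP => [yC|]; first exact: xorw_code.
  by rewrite -{2}(xorwK x y); apply: xorw_code.
apply: eq_forallb => j; rewrite !inE negb_or andbC xorwE.
by case: (x j); case: (y j).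
Qed.

Lemma posterior_self : x \in S.
Proof. by rewrite inE xC; apply/forallP => j; apply/implyP. Qed.

Lemma posterior_bit_half : undetermined C (i |: E) i ->
  INR #|[set y in S | y i]| / INR #|S| = / 2.
Proof.
case/existsP => w /andP [wS wi].
have flip y : y \in S -> xorw w y \in S.
  by rewrite !posteriorE xorwCA; apply: xorw_subcode.
have halves : #|[set y in S | y i]| = #|[set y in S | ~~ y i]|.
  exact: card_bit_flip wi flip.
have -> : #|S| = (#|[set y in S | y i]| + #|[set y in S | ~~ y i]|)%N.
  rewrite -(cardsID [set y : word N | y i] S).
  by congr (_ + _)%N; apply: eq_card => y; rewrite !inE andbC.
have : (0 < #|[set y in S | y i]|)%N.
  rewrite card_gt0; apply/set0Pn; case xi: (x i).
    by exists x; rewrite inE posterior_self xi.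
  by exists (xorw w x); rewrite inE flip ?posterior_self //= xorwE wi xi.
rewrite -halves.
move/ltP/lt_0_INR; rewrite plus_INR => card_pos; field; lra.
Qed.

Lemma posterior_bit_const : ~~ undetermined C (i |: E) i -> {in S, forall y : word N, y i = x i}.
Proof.
move=> det y; rewrite posteriorE => xyS; apply/eqP; apply: contraR det => yxi.
by apply/existsP; exists (xorw x y); rewrite xyS xorwE; case: (x i) yxi; case: (y i).
Qed.

Lemma cond_entropy_iE : cond_entropy_i C i x E = b2R (undetermined C (i |: E) i).
Proof.
change (h2 (INR #|[set y in S | y i]| / INR #|S|) = b2R (undetermined C (i |: E) i)).
case: (boolP (undetermined C (i |: E) i)) => [undet|det] /=.
  by rewrite posterior_bit_half // h2_half.
have const := posterior_bit_const det.
case xi: (x i).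
  have -> : [set y in S | y i] = S.
    by apply/setP => y; rewrite inE andb_idr // => /const ->.
  rewrite /Rdiv Rinv_r ?h2_1 //; apply: not_0_INR.
  by apply/eqP; rewrite -lt0n card_gt0; apply/set0Pn; exists x; apply: posterior_self.
have -> : [set y in S | y i] = set0.
  by apply/setP => y; rewrite in_set0 in_set; apply/negbTE/andP => -[/const ->]; rewrite xi.
by rewrite cards0 /Rdiv Rmult_0_l h2_0.
Qed.

End Posterior.

(** * Erasure patterns and the Margulis-Russo formula *)

Section ErasurePatterns.
Variable N : nat.
Implicit Types (p : R) (i : 'I_N) (E : {set 'I_N}) (f : {set 'I_N} -> R).

(* The probability of [E] seen as a pattern on the [N - 1] coordinates other than
   some [i \notin E]. *)
Definition pat_prob1 p E := p ^ #|E| * (1 - p) ^ (N - #|E|).-1.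

Definition toggle i E := if i \in E then E :\ i else i |: E.

Lemma toggleK i : involutive (toggle i).
Proof.
move=> E; rewrite /toggle; case iE: (i \in E); first by rewrite setD11 setD1K.
by rewrite setU11 setU1K // iE.
Qed.

Lemma rsum_pair_setU1 i f :
  \big[Rplus/R0]_(E : {set 'I_N}) f E =
  \big[Rplus/R0]_(E : {set 'I_N} | i \notin E) (f (i |: E) + f E).
Proof.
rewrite (bigID (fun E => i \in E)) /= big_split; congr (_ + _).
rewrite (reindex_inj (can_inj (toggleK i))) /=.
by apply: eq_big => E; rewrite /toggle; case: (i \in E) => //=; rewrite ?setD11 ?setU11.
Qed.

Lemma card_notin_lt i E : i \notin E -> (#|E| < N)%N.
Proof.
move=> iE; have : E \proper [set: 'I_N].
  by rewrite properEneq subsetT andbT; apply: contraNneq iE => ->; rewrite inE.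
by move/proper_card; rewrite cardsT card_ord.
Qed.

Lemma pat_prob_setU1 i E p : i \notin E -> pat_prob p (i |: E) = p * pat_prob1 p E.
Proof. by move=> iE; rewrite /pat_prob /pat_prob1 cardsU1 iE add1n subnS /=; ring. Qed.

Lemma pat_prob_notin i E p : i \notin E -> pat_prob p E = (1 - p) * pat_prob1 p E.
Proof.
move=> /card_notin_lt ltEN; rewrite /pat_prob /pat_prob1.
by rewrite -[(N - #|E|)%N]prednK ?subn_gt0 //=; ring.
Qed.

Lemma rsum_pat_prob_setU1 i p (g : {set 'I_N} -> R) :
  \big[Rplus/R0]_(E : {set 'I_N}) (pat_prob p E * g (i |: E)) =
  \big[Rplus/R0]_(E : {set 'I_N} | i \notin E) (pat_prob1 p E * g (i |: E)).
Proof.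
rewrite (rsum_pair_setU1 i); apply: eq_bigr => E iE.
by rewrite setUA setUid pat_prob_setU1 // (pat_prob_notin p iE); ring.
Qed.

Definition pat_prob' p E :=
  INR #|E| * p ^ #|E|.-1 * (1 - p) ^ (N - #|E|) - INR (N - #|E|) * pat_prob1 p E.

Lemma derivable_pt_lim_pat_prob E p :
  derivable_pt_lim (fun q => pat_prob q E) p (pat_prob' p E).
Proof.
have d1 : derivable_pt_lim (fun q => (1 - q) ^ (N - #|E|)) p
    (INR (N - #|E|) * (1 - p) ^ (N - #|E|).-1 * (0 - 1)).
  apply: (derivable_pt_lim_comp (fun q => 1 - q) (fun z => z ^ (N - #|E|))).
    exact: derivable_pt_lim_minus (derivable_pt_lim_const 1 p) (derivable_pt_lim_id p).
  exact: derivable_pt_lim_pow.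
have := derivable_pt_lim_mult _ _ _ _ _ (derivable_pt_lim_pow p #|E|) d1.
by rewrite /pat_prob' /pat_prob1 /mult_fct; congr derivable_pt_lim; ring.
Qed.

Lemma pat_prob'E E p : pat_prob' p E = \big[Rplus/R0]_i
  (p ^ #|E|.-1 * (1 - p) ^ (N - #|E|) * b2R (i \in E) - pat_prob1 p E * b2R (i \notin E)).
Proof.
rewrite /pat_prob' /Rminus big_split rsumN /= !rsumMl !rsum_b2R.
rewrite (_ : [set i | i \in E] = E); last by apply/setP => i; rewrite inE.
rewrite (_ : [set i | i \notin E] = ~: E); last by apply/setP => i; rewrite !inE.
suff -> : #|~: E| = (N - #|E|)%N by set m := #|E|; ring.
have := cardsC E; rewrite card_ord => sumN.
by rewrite -[X in (_ = X - _)%N]sumN addKn.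
Qed.

Lemma margulis_russo f p :
  derivable_pt_lim (fun q => \big[Rplus/R0]_(E : {set 'I_N}) (pat_prob q E * f E)) p
    (\big[Rplus/R0]_i \big[Rplus/R0]_(E : {set 'I_N} | i \notin E)
        (pat_prob1 p E * (f (i |: E) - f E))).
Proof.
have := @derivable_pt_lim_rsum _ (index_enum {set 'I_N}) xpredT
  (fun E q => pat_prob q E * f E) (fun E q => pat_prob' q E * f E) p
  (fun E _ => derivable_pt_lim_scal_right _ _ _ _ (derivable_pt_lim_pat_prob E p)).
congr derivable_pt_lim.
transitivity (\big[Rplus/R0]_(E : {set 'I_N}) \big[Rplus/R0]_i (f E *
  (p ^ #|E|.-1 * (1 - p) ^ (N - #|E|) * b2R (i \in E) - pat_prob1 p E * b2R (i \notin E)))).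
  by apply: eq_bigr => E _; rewrite pat_prob'E rsumMl Rmult_comm.
rewrite exchange_big; apply: eq_bigr => i _ /=.
rewrite (rsum_pair_setU1 i); apply: eq_bigr => E iE.
rewrite setU11 (negbTE iE) cardsU1 iE add1n subnS /= /pat_prob1.
rewrite !Rmult_0_r !Rmult_1_r.
by move: (f (i |: E)) (f E) (p ^ #|E| * _) => u v a; ring.
Qed.

Lemma pat_prob_ge0 p E : 0 <= p <= 1 -> 0 <= pat_prob p E.
Proof. by move=> p01; apply: Rmult_le_pos; apply: pow_le; lra. Qed.

Lemma pat_prob1_ge0 p E : 0 <= p <= 1 -> 0 <= pat_prob1 p E.
Proof. by move=> p01; apply: Rmult_le_pos; apply: pow_le; lra. Qed.

Lemma pat_prob_1 E : pat_prob 1 E = b2R (E == setT).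
Proof.
rewrite /pat_prob; case: eqP => [->|/eqP nfull] /=.
  by rewrite cardsT card_ord subnn pow1; ring.
rewrite Rminus_diag pow_i ?Rmult_0_r //; apply/ltP; rewrite subn_gt0.
have := proper_card (_ : E \proper setT); rewrite cardsT card_ord; apply.
by rewrite properT.
Qed.

Lemma rsum_pat_prob_1 f : \big[Rplus/R0]_(E : {set 'I_N}) (pat_prob 1 E * f E) = f setT.
Proof.
rewrite (bigD1 setT) //= big1 => [|E /negbTE nfull]; rewrite pat_prob_1 ?eqxx ?nfull /=; ring.
Qed.

Lemma rsum_pat_prob p : 0 < p < 1 -> \big[Rplus/R0]_(E : {set 'I_N}) pat_prob p E = 1.
Proof.
move=> p01; rewrite -(rsum_pat_prob_1 (fun _ => 1)).
under eq_bigr do rewrite -[pat_prob p _]Rmult_1_r.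
have dconst q : p <= q <= 1 -> derivable_pt_lim
    (fun t => \big[Rplus/R0]_(E : {set 'I_N}) (pat_prob t E * 1)) q 0.
  move=> _; have := margulis_russo (fun _ => 1) q.
  by rewrite big1 // => i _; rewrite big1 // => E _; ring.
have [q [/= eq_diff _]] := MVT_cor2 _ _ p 1 (proj2 p01) dconst.
lra.
Qed.

End ErasurePatterns.

(** * EXIT function, equivocation and block erasure *)

Lemma dmin_le_weight N (C : code N) z : z \in C -> z != zerow N -> (dmin C <= weight z)%N.
Proof.
move=> zC nz0; rewrite /dmin.
have : z \in index_enum (word N) by rewrite mem_index_enum.
elim: (index_enum (word N)) => [//|y s IH]; rewrite inE big_cons => /orP [/eqP <-|zs].
  by rewrite zC nz0 geq_minl.
by case: ifP => _; [exact: leq_trans (geq_minr _ _) (IH zs) | exact: IH].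
Qed.

Lemma dmin_le_N N (C : code N) : (dmin C <= N)%N.
Proof.
rewrite /dmin; elim/big_ind: _ => // [m n mN _|z _]; first exact: leq_trans (geq_minl m n) mN.
by rewrite /weight -[X in (_ <= X)%N]card_ord max_card.
Qed.

Lemma block_erasure_ge0 N (C : code N) p : 0 <= p <= 1 -> 0 <= block_erasure C p.
Proof.
move=> p01; do 2!apply: rsum_ge0 => ? _.
apply: Rmult_le_pos; last by case: ifP => _; lra.
apply: Rmult_le_pos; last exact: pat_prob_ge0.
by case: (posnP #|C|) => [->|/ltP/lt_0_INR/Rinv_0_lt_compat]; [rewrite Rinv_0; lra | lra].
Qed.

Lemma block_erasure_0 N (C : code N) : block_erasure C 0 = 0.
Proof.
apply: big1 => x _; apply: big1 => E _.
case: (eqVneq E set0) => [->|/negbTE E_neq0]; last first.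
  rewrite /pat_prob pow_i; first ring.
  by apply/ltP; rewrite lt0n cards_eq0 E_neq0.
case: ifP => [/existsP [y /and3P [_ yx /forallP y_obs]]|_]; last by ring.
by case/eqP: yx; apply/ffunP => j; apply/eqP/(implyP (y_obs j)); rewrite inE.
Qed.

Section ExitFunction.
Variables (N : nat) (C : code N).
Hypotheses (C_linear : is_linear C) (C_proper : proper_code C) (C_dmin : (2 <= dmin C)%N).
Implicit Types (p : R) (i : 'I_N) (E : {set 'I_N}).

Lemma blocklength_ge2 : (2 <= N)%N.
Proof. exact: leq_trans C_dmin (dmin_le_N C). Qed.

Lemma INR_N_gt0 : 0 < INR N.
Proof. by apply: lt_0_INR; apply/ltP; apply: leq_trans blocklength_ge2. Qed.

Lemma ln_N_gt0 : 0 < ln (INR N).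
Proof.
rewrite -ln_1; apply: ln_increasing; first lra.
by apply: (lt_INR 1); apply/ltP; apply: blocklength_ge2.
Qed.

Lemma INR_dmin_gt0 : 0 < INR (dmin C).
Proof. by apply: lt_0_INR; apply/ltP; apply: leq_trans C_dmin. Qed.

Lemma INR_card_code_gt0 : 0 < INR #|C|.
Proof. by apply: lt_0_INR; apply/ltP/card_gt0P; exists (zerow N); case: C_linear. Qed.

Lemma INR_card_subcode_gt0 E : 0 < INR #|subcode C E|.
Proof. by apply: lt_0_INR; apply/ltP/card_gt0P; exists (zerow N); apply: zerow_subcode. Qed.

Definition exit_sum p := \big[Rplus/R0]_i \big[Rplus/R0]_(E : {set 'I_N} | i \notin E)
  (pat_prob1 p E * b2R (undetermined C (i |: E) i)).

Lemma exit_funE p : exit_fun C p = / INR N * exit_sum p.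
Proof.
congr (_ * _); apply: eq_bigr => i _.
rewrite /exit_i -(rsum_pat_prob_setU1 i p (fun F => b2R (undetermined C F i))).
under eq_bigr => x xC do under eq_bigr => E _ do
  rewrite (cond_entropy_iE C_linear i E xC) Rmult_assoc.
rewrite rsum_cst rsumMl -Rmult_assoc Rinv_r ?Rmult_1_l //.
by have := INR_card_code_gt0; lra.
Qed.

(* H(X | Y) / N: the codeword is uniform on a coset of [subcode C E]. *)
Definition equivocation p := \big[Rplus/R0]_(E : {set 'I_N})
  (pat_prob p E * (log2 (INR #|subcode C E|) / INR N)).

Lemma log2_card_subcode_setU1 i E : i \notin E ->
  log2 (INR #|subcode C (i |: E)|) - log2 (INR #|subcode C E|) =
  b2R (undetermined C (i |: E) i).
Proof.
move=> iE; rewrite card_subcode_setU1 // mult_INR /log2.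
have card_gt0 := INR_card_subcode_gt0 E; have ln2_neq0 : ln 2 <> 0 by have := ln2_gt0; lra.
case: (undetermined _ _ _) => /=.
  rewrite (_ : 1 + 1 = 2); last by ring.
  rewrite ln_mult //; last by lra.
  by move: (ln (INR #|subcode C E|)) => L; field.
by rewrite Rmult_1_l; move: (ln (INR #|subcode C E|)) => L; field.
Qed.

Lemma derivable_pt_lim_equivocation p : derivable_pt_lim equivocation p (exit_fun C p).
Proof.
have := margulis_russo (fun E => log2 (INR #|subcode C E|) / INR N) p.
congr derivable_pt_lim; rewrite exit_funE /exit_sum -rsumMl; apply: eq_bigr => i _.
rewrite -rsumMl; apply: eq_bigr => E iE.
rewrite -log2_card_subcode_setU1 // /Rdiv.
by move: (log2 _) (log2 _) (pat_prob1 p E) => a b c; ring.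
Qed.

Lemma equivocation_1 : equivocation 1 = rate C.
Proof.
rewrite /equivocation rsum_pat_prob_1 /rate; congr (log2 (INR _) / _).
by apply: eq_card => z; rewrite inE andb_idr // => _; apply/forallP => j; rewrite inE.
Qed.

Lemma equivocation_ge0 p : 0 <= p <= 1 -> 0 <= equivocation p.
Proof.
move=> p01; apply: rsum_ge0 => E _; apply: Rmult_le_pos; first exact: pat_prob_ge0.
have N_gt0 := INR_N_gt0; have ln2_pos := ln2_gt0.
rewrite /log2 /Rdiv; apply: Rmult_le_pos; last by left; apply: Rinv_0_lt_compat.
apply: Rmult_le_pos; last by left; apply: Rinv_0_lt_compat.
rewrite -ln_1; apply: ln_le; first lra.
by apply: (le_INR 1); apply/leP/card_gt0P; exists (zerow N); apply: zerow_subcode.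
Qed.

Lemma exit_sum_le p : 0 < p < 1 -> exit_sum p <= INR N.
Proof.
move=> p01; rewrite -rsum1_ord; apply: rsum_le => i _.
have <- : \big[Rplus/R0]_(E : {set 'I_N} | i \notin E) (pat_prob1 p E * 1) = 1.
  rewrite -(rsum_pat_prob_setU1 i p (fun _ => 1)) -[in RHS](@rsum_pat_prob N p p01).
  by apply: eq_bigr => E _; rewrite Rmult_1_r.
apply: rsum_le => E _; apply: Rmult_le_compat_l; first by apply: pat_prob1_ge0; lra.
by rewrite /b2R; case: ifP => _; lra.
Qed.

Lemma exit_sum_gt0 p : 0 < p < 1 -> 0 < exit_sum p.
Proof.
move=> p01; pose i0 : 'I_N := Ordinal (leq_trans (isT : 0 < 2)%N blocklength_ge2).
have term_ge0 i E : 0 <= pat_prob1 p E * b2R (undetermined C (i |: E) i).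
  by apply: Rmult_le_pos; [apply: pat_prob1_ge0; lra | apply: b2R_ge0].
have undet_full : undetermined C (i0 |: [set: 'I_N] :\ i0) i0.
  have [x [xC xi]] := C_proper i0; apply/existsP; exists x.
  by rewrite xi andbT inE xC; apply/forallP => j; rewrite setD1K ?inE.
rewrite /exit_sum.
apply: Rlt_le_trans (rsum_term_le (fun i _ => rsum_ge0 _ (fun E _ => term_ge0 i E)) (isT : xpredT i0)).
have i0_notin : i0 \notin [set: 'I_N] :\ i0 by rewrite setD11.
apply: Rlt_le_trans (rsum_term_le (fun E _ => term_ge0 i0 E) i0_notin).
rewrite undet_full /b2R Rmult_1_r; apply: Rmult_lt_0_compat; apply: pow_lt; lra.
Qed.

Lemma exit_fun_gt0 p : 0 < p < 1 -> 0 < exit_fun C p.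
Proof.
move=> p01; rewrite exit_funE; apply: Rmult_lt_0_compat; last exact: exit_sum_gt0.
exact: Rinv_0_lt_compat INR_N_gt0.
Qed.

Lemma exit_fun_le1 p : 0 < p < 1 -> exit_fun C p <= 1.
Proof.
move=> p01; rewrite exit_funE -(Rinv_l (INR N)); last by have := INR_N_gt0; lra.
apply: Rmult_le_compat_l; [by left; apply: Rinv_0_lt_compat INR_N_gt0 | exact: exit_sum_le].
Qed.

(* A second codeword compatible with the observation differs from [x] by a nonzero
   codeword of [subcode C E], whose [dmin C] or more ones are undetermined coordinates. *)
Lemma undecodable_le_undetermined x E : x \in C ->
  (if [exists x' in C, (x' != x) && [forall j, (j \notin E) ==> (x' j == x j)]] then 1 else 0)
  <= / INR (dmin C) * \big[Rplus/R0]_i cond_entropy_i C i x E.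
Proof.
move=> xC; have dmin_gt0 := INR_dmin_gt0.
under eq_bigr => i _ do rewrite (cond_entropy_iE C_linear i E xC).
rewrite rsum_b2R; case: ifP => [/existsP [y /and3P [yC yx /forallP y_obs]]|_]; last first.
  by apply: Rmult_le_pos; [left; apply: Rinv_0_lt_compat | apply: pos_INR].
have xyC : xorw x y \in C by apply: xorw_code.
have weight_le : (weight (xorw x y) <= #|[set i | undetermined C (i |: E) i]|)%N.
  apply: subset_leq_card; apply/subsetP => i; rewrite !inE => xyi.
  apply/existsP; exists (xorw x y); rewrite xyi andbT inE xyC /=.
  apply/forallP => j; apply/implyP; rewrite !inE negb_or => /andP [_ jE].
  by rewrite xorwE (eqP (implyP (y_obs j) jE)); case: (x j).
have := dmin_le_weight xyC; rewrite xorw_eq0 eq_sym => /(_ yx) /leq_trans /(_ weight_le).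
move/leP/le_INR => dmin_le; rewrite -(Rinv_l (INR (dmin C))); last lra.
by apply: Rmult_le_compat_l; first by left; apply: Rinv_0_lt_compat.
Qed.

Lemma block_erasure_le_exit p : 0 <= p <= 1 ->
  block_erasure C p <= INR N / INR (dmin C) * exit_fun C p.
Proof.
move=> p01; have := INR_N_gt0; have := INR_dmin_gt0; move=> dmin_gt0 N_gt0.
have weight_ge0 E : 0 <= / INR #|C| * pat_prob p E.
  by apply: Rmult_le_pos; [left; apply: Rinv_0_lt_compat INR_card_code_gt0 | apply: pat_prob_ge0].
apply: (@Rle_trans _ (\big[Rplus/R0]_(x in C) \big[Rplus/R0]_(E : {set 'I_N}) \big[Rplus/R0]_i
    (/ INR (dmin C) * (/ INR #|C| * pat_prob p E * cond_entropy_i C i x E)))).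
  apply: rsum_le => x xC; apply: rsum_le => E _.
  rewrite !rsumMl -Rmult_assoc (Rmult_comm (/ INR (dmin C))) [X in _ <= X]Rmult_assoc.
  apply: Rmult_le_compat_l; first exact: weight_ge0.
  exact: undecodable_le_undetermined.
apply: Req_le; have -> : INR N / INR (dmin C) * exit_fun C p =
    / INR (dmin C) * \big[Rplus/R0]_i exit_i C i p.
  by rewrite /exit_fun; move: (\big[Rplus/R0]_i _) => S; field; split; lra.
under eq_bigr do rewrite exchange_big.
rewrite exchange_big -rsumMl; apply: eq_bigr => i _.
by rewrite -rsumMl; apply: eq_bigr => x _; rewrite -rsumMl.
Qed.

End ExitFunction.

(** * Consequences of the differential inequality *)

Section DifferentialInequality.
Variables (N : nat) (C : code N) (c : R).
Hypotheses (C_linear : is_linear C) (C_proper : proper_code C) (C_dmin : (2 <= dmin C)%N).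
Hypothesis c_gt0 : 0 < c.
Hypothesis exit_fun_ode : forall p, 0 < p < 1 ->
  exists l, derivable_pt_lim (exit_fun C) p l /\
    l >= c * ln (INR N) * exit_fun C p * (1 - exit_fun C p).

Local Notation h := (exit_fun C).

Lemma exit_fun_ode_ex p : exists l, 0 < p < 1 ->
  derivable_pt_lim h p l /\ l >= c * ln (INR N) * h p * (1 - h p).
Proof.
case: (classic (0 < p < 1)) => [/exit_fun_ode [l hl]|np01]; first by exists l.
by exists 0 => p01; case: np01.
Qed.

(* A derivative of [h] on (0, 1) as a function, as the mean value theorem needs. *)
Definition exit_fun' p : R :=
  proj1_sig (constructive_indefinite_description _ (exit_fun_ode_ex p)).

Lemma exit_fun'P p : 0 < p < 1 ->
  derivable_pt_lim h p (exit_fun' p) /\ exit_fun' p >= c * ln (INR N) * h p * (1 - h p).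
Proof. by rewrite /exit_fun'; case: constructive_indefinite_description. Qed.

Lemma exit_fun'_ge0 p : 0 < p < 1 -> 0 <= exit_fun' p.
Proof.
move=> p01; have [_ ode] := exit_fun'P p01.
have h_gt0 := exit_fun_gt0 C_linear C_proper C_dmin p01.
have h_le1 := exit_fun_le1 C_linear C_dmin p01.
have := ln_N_gt0 C_dmin; move=> lnN_gt0.
suff : 0 <= c * ln (INR N) * h p * (1 - h p) by lra.
apply: Rmult_le_pos; last lra.
by apply: Rmult_le_pos; [apply: Rmult_le_pos | ]; lra.
Qed.

Lemma exit_fun_nondecr s t : 0 < s -> s <= t -> t < 1 -> h s <= h t.
Proof.
move=> s_gt0 /Rle_lt_or_eq_dec [st|<-] t_lt1; last lra.
have in01 x : s <= x <= t -> 0 < x < 1 by lra.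
have [x [diff x_in]] :=
  MVT_cor2 h exit_fun' s t st (fun x x_in => proj1 (exit_fun'P (in01 x x_in))).
have : 0 <= exit_fun' x * (t - s).
  by apply: Rmult_le_pos; [apply: exit_fun'_ge0; apply: in01 | ]; lra.
lra.
Qed.

Lemma area_bound s : 0 < s < 1 -> (1 - s) * h s <= rate C.
Proof.
move=> s01; have [x [diff x_in]] := MVT_cor2 (equivocation C) h s 1 (proj2 s01)
  (fun x _ => derivable_pt_lim_equivocation C_linear x).
rewrite equivocation_1 in diff.
have := equivocation_ge0 C_linear C_dmin (conj (Rlt_le _ _ (proj1 s01)) (Rlt_le _ _ (proj2 s01))).
have : (1 - s) * h s <= (1 - s) * h x.
  by apply: Rmult_le_compat_l; [lra | apply: exit_fun_nondecr; lra].
lra.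
Qed.

Lemma exit_fun_log_slope x a : 0 < x < 1 -> h x <= a ->
  c * ln (INR N) * (1 - a) <= exit_fun' x / h x.
Proof.
move=> x01 hxa; have [_ ode] := exit_fun'P x01.
have h_gt0 := exit_fun_gt0 C_linear C_proper C_dmin x01.
have lnN_gt0 := ln_N_gt0 C_dmin.
apply: (Rmult_le_reg_r (h x)) => //.
rewrite /Rdiv [X in _ <= X]Rmult_assoc Rinv_l ?Rmult_1_r; last lra.
have : c * ln (INR N) * h x * (1 - a) <= c * ln (INR N) * h x * (1 - h x).
  by apply: Rmult_le_compat_l; [apply: Rmult_le_pos; [apply: Rmult_le_pos|]|]; lra.
lra.
Qed.

Lemma exit_fun_le_exp p q : 0 < p -> p < q -> q < 1 -> rate C < 1 - q ->
  h p <= exp (- (c * ln (INR N) * (1 - rate C / (1 - q)) * (q - p))).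
Proof.
move=> p_gt0 pq q_lt1 rate_lt; set a := rate C / (1 - q).
have in01 x : p <= x <= q -> 0 < x < 1 by lra.
have h_gt0 x (x_in : p <= x <= q) := exit_fun_gt0 C_linear C_proper C_dmin (in01 x x_in).
have hq_le : h q <= a.
  apply: (Rmult_le_reg_l (1 - q)); first lra.
  rewrite /a /Rdiv -Rmult_assoc Rinv_r_simpl_m; last lra.
  by apply: area_bound; lra.
have dlnh x (x_in : p <= x <= q) :
    derivable_pt_lim (fun y => ln (h y)) x (exit_fun' x / h x).
  have := derivable_pt_lim_comp h ln x _ _ (proj1 (exit_fun'P (in01 x x_in)))
    (derivable_pt_lim_ln _ (h_gt0 x x_in)).
  by rewrite Rmult_comm.
have [x [/= diff x_in]] := MVT_cor2 _ _ p q pq dlnh.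
have x_in' : p <= x <= q by lra.
have slope := exit_fun_log_slope (in01 x x_in')
  (Rle_trans _ _ _ (exit_fun_nondecr (proj1 (in01 x x_in')) (proj2 x_in') q_lt1) hq_le).
have lnhq_le0 : ln (h q) <= 0.
  by rewrite -ln_1; apply: ln_le; [apply: h_gt0 | apply: (exit_fun_le1 C_linear C_dmin)]; lra.
have : c * ln (INR N) * (1 - a) * (q - p) <= exit_fun' x / h x * (q - p).
  by apply: Rmult_le_compat_r; lra.
rewrite -(exp_ln (h p)); last by apply: h_gt0; lra.
move=> ?; apply: exp_le; lra.
Qed.

Lemma block_erasure_le_exp_ln p q theta : 0 <= p -> p < q -> q < 1 -> rate C < 1 - q ->
  2 * theta <= c * (1 - rate C / (1 - q)) * (q - p) ->
  (1 - theta) * ln (INR N) <= ln (INR (dmin C)) ->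
  block_erasure C p <= exp (- theta * ln (INR N)).
Proof.
move=> p_ge0 pq q_lt1 rate_lt rate_slack dmin_large.
have [->|p_gt0] : p = 0 \/ 0 < p by lra.
  by rewrite block_erasure_0; left; apply: exp_pos.
have N_gt0 := INR_N_gt0 C_dmin; have dmin_gt0 := INR_dmin_gt0 C_dmin.
have lnN_gt0 := ln_N_gt0 C_dmin.
apply: Rle_trans (block_erasure_le_exit C_linear C_dmin (p := p) _) _; first lra.
rewrite -[INR N / _](exp_ln); last by apply: Rdiv_lt_0_compat.
apply: Rle_trans (Rmult_le_compat_l _ _ _ (Rlt_le _ _ (exp_pos _))
  (exit_fun_le_exp p_gt0 pq q_lt1 rate_lt)) _.
rewrite -exp_plus /Rdiv ln_mult ?ln_Rinv //; last exact: Rinv_0_lt_compat.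
apply: exp_le.
have : 2 * theta * ln (INR N) <= c * ln (INR N) * (1 - rate C / (1 - q)) * (q - p).
  have := Rmult_le_compat_r _ _ _ (Rlt_le _ _ lnN_gt0) rate_slack.
  by move: (1 - _) => a; lra.
lra.
Qed.

End DifferentialInequality.

(** * Asymptotics *)

Lemma ln_INR_unbounded (N : nat -> nat) :
  (forall M : nat, exists n0, forall n, (n0 <= n)%N -> (M <= N n)%N) ->
  forall A, exists n0, forall n, (n0 <= n)%N -> A <= ln (INR (N n)).
Proof.
move=> N_unbounded A; have [M M_gt] := INR_unbounded (exp A).
have [n0 N_ge] := N_unbounded M; exists n0 => n n0n.
rewrite -(ln_exp A); apply: ln_le; first exact: exp_pos.
exact: Rle_trans (Rlt_le _ _ M_gt) (le_INR _ _ (leP (N_ge n n0n))).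
Qed.

Lemma cv0_le_exp_neg (u L : nat -> R) theta : 0 < theta ->
  (forall A, exists n0, forall n, (n0 <= n)%N -> A <= L n) ->
  (exists n0, forall n, (n0 <= n)%N -> 0 <= u n <= exp (- theta * L n)) ->
  Un_cv u 0.
Proof.
move=> theta_gt0 L_unbounded [n0 u_le] eps eps_gt0.
have [n1 L_large] := L_unbounded ((1 - ln eps) / theta).
exists (n0 + n1)%N => n /leP n_ge.
have [u_ge0 u_le_exp] := u_le n (leq_trans (leq_addr _ _) n_ge).
have : (1 - ln eps) / theta * theta <= L n * theta.
  by apply: Rmult_le_compat_r; [lra | apply: L_large; apply: leq_trans (leq_addl _ _) n_ge].
rewrite /Rdiv Rmult_assoc Rinv_l ?Rmult_1_r; last lra.
move=> theta_L; rewrite /R_dist Rminus_0_r Rabs_pos_eq //.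
apply: Rle_lt_trans u_le_exp _; rewrite -[X in _ < X](exp_ln eps) //.
apply: exp_increasing; lra.
Qed.

Lemma ratio_near1_le x y t : 0 < y -> Rabs (x / y - 1) < t -> (1 - t) * y <= x.
Proof.
move=> y_gt0 /Rabs_def2 [_ near]; have -> : x = x / y * y by field; lra.
apply: Rmult_le_compat_r; lra.
Qed.

Unset Implicit Arguments.
Theorem theorem4 (N : nat -> nat) (C : forall n, code (N n)) (r c : R) :
  (forall n, is_linear (C n) /\ proper_code (C n) /\ (2 <= dmin (C n))%N) ->
  (forall M : nat, exists n0 : nat, forall n : nat, (n0 <= n)%N -> (M <= N n)%N) ->
  0 < r < 1 ->
  Un_cv (fun n => rate (C n)) r ->
  0 < c ->
  (forall (n : nat) (p : R), 0 < p < 1 ->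
     exists l : R, derivable_pt_lim (exit_fun (C n)) p l /\
       l >= c * ln (INR (N n)) * exit_fun (C n) p * (1 - exit_fun (C n) p)) ->
  Un_cv (fun n => ln (INR (dmin (C n))) / ln (INR (N n))) 1 ->
  forall p : R, 0 <= p < 1 - r -> Un_cv (fun n => block_erasure (C n) p) 0.
Proof.
move=> C_ok N_unbounded r01 rate_cv c_gt0 exit_fun_ode dmin_cv p p_range.
set e := (1 - r - p) / 3; have e_def : 3 * e = 1 - r - p by rewrite /e; field.
have e_gt0 : 0 < e by lra.
(* With q = p + e and rate < r + e, the factor 1 - rate / (1 - q) exceeds e / (r + 2 e). *)
set theta := c * e * e / (2 * (r + 2 * e)).
have theta_gt0 : 0 < theta.
  by apply: Rdiv_lt_0_compat; [do 2!apply: Rmult_lt_0_compat | ]; lra.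
apply: (cv0_le_exp_neg theta_gt0 (ln_INR_unbounded N_unbounded)).
have [n1 rate_near] := rate_cv e e_gt0; have [n2 dmin_near] := dmin_cv theta theta_gt0.
exists (n1 + n2)%N => n n_ge; have [C_linear [C_proper C_dmin]] := C_ok n.
have /Rabs_def2 [rate_lt _] : Rabs (rate (C n) - r) < e.
  by apply: rate_near; apply/leP; apply: leq_trans (leq_addr _ _) n_ge.
split; first by apply: block_erasure_ge0; lra.
apply: (block_erasure_le_exp_ln C_linear C_proper C_dmin c_gt0 (exit_fun_ode n) (q := p + e));
  try lra.
- have -> : 1 - (p + e) = r + 2 * e by lra.
  have -> : p + e - p = e by ring.
  have -> : 2 * theta = c * (1 - (r + e) / (r + 2 * e)) * e by rewrite /theta; field; lra.
  apply: Rmult_le_compat_r; [lra | apply: Rmult_le_compat_l; [lra | ]].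
  suff : rate (C n) / (r + 2 * e) <= (r + e) / (r + 2 * e) by lra.
  by apply: Rmult_le_compat_r; [left; apply: Rinv_0_lt_compat | ]; lra.
- apply: ratio_near1_le; first exact: ln_N_gt0 C_dmin.
  by apply: dmin_near; apply/leP; apply: leq_trans (leq_addl _ _) n_ge.
Qed.
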